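(* If $p$ is a prime number with $p\geq 7$, then \[ B^{(-p+3)}_{p-3}\equiv 0\pmod p. \]
   Context: For any integer $k$, let $\mathrm{Li}_k(t)=\sum_{n=1}^{\infty} t^n/n^k$. The poly-Bernoulli numbers $B^{(k)}_n$ ($n\ge 0$) are defined by $\frac{\mathrm{Li}_k(1-e^{-t})}{1-e^{-t}}=\sum_{n=0}^{\infty}B^{(k)}_n\frac{t^n}{n!}$. For negative upper index these are integers. *)

From HB Require Import structures.
From mathcomp Require Import all_boot all_order all_algebra.
Set Implicit Arguments. Unset Strict Implicit. Unset Printing Implicit Defensive.
Import Order.TTheory GRing.Theory Num.Theory.
Local Open Scope ring_scope.

Definition expneg_trunc (n : nat) : {poly rat} :=
  \poly_(i < n.+1) ((-1) ^+ i / (i`!)%:R).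

(* Poly-Bernoulli numbers, read off from the generating function
     Li_k(1 - e^{-t}) / (1 - e^{-t}) = sum_{m >= 0} (1 - e^{-t})^m / (m+1)^k
                                     = sum_n B_n^{(k)} t^n / n!.
   Since (1 - e^{-t})^m has t-adic valuation m, only m <= n contributes to the
   coefficient of t^n, and that coefficient only depends on the coefficients
   of e^{-t} up to degree n. *)
Definition polyBernoulli (k : int) (n : nat) : rat :=
  (n`!)%:R *
  (\sum_(m < n.+1) (((m.+1)%:R : rat) ^ (- k)) *: (1 - expneg_trunc n) ^+ m)`_n.

(* Let b f n = sum_k (-1)^k C(n,k) f k be the (involutive) binomial transform, so that
   B_n^(-k) = sum_(m <= n) (m+1)^k b((-j)^n)(m).  Modulo p, Fermat turns the exponent
   p - 3 into -2, leaving sum_(m <= p-3) (m+1)^-2 b(k^-2)(m).  Dividing by k commutes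
   with b up to partial summation; this rewrites the m-th term as G(m+1), where
   G N = N^-2 b(k^-2)(N) - N^-3 b(k^-1)(N), and shows b(k^-1) = -H_1.  As
   C(p-1,k) = (-1)^k mod p, b at p - 1 is a plain sum, and with involutivity this gives
   sum_(N < p) G N = sum_m m^-1 H_3(m) + sum_m m^-3 H_1(m) = H_1 H_3 + H_4, the harmonic
   sums taken up to p - 1.  These vanish mod p because the power sums do. *)

From mathcomp Require Import all_boot all_order all_algebra.
From mathcomp Require Import ring zify.

Set Implicit Arguments.
Unset Strict Implicit.
Unset Printing Implicit Defensive.
Import GRing.Theory Num.Theory.
Local Open Scope ring_scope.

Section BinomialTransform.
Variable R : pzRingType.
Implicit Types f g : nat -> R.

Definition binomial_transform f n : R :=
  \sum_(k < n.+1) (-1) ^+ k *+ 'C(n, k) * f k.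

Lemma eq_binomial_transform f g n :
  (forall k, (k <= n)%N -> f k = g k) -> binomial_transform f n = binomial_transform g n.
Proof. by move=> eq_fg; apply: eq_bigr => -[k le_kn] _; rewrite eq_fg. Qed.

Lemma binomial_transformB f g n :
  binomial_transform (fun k => f k - g k) n = binomial_transform f n - binomial_transform g n.
Proof. by rewrite -sumrB; apply: eq_bigr => k _; rewrite mulrBr. Qed.

Lemma binomial_transformS f n :
  binomial_transform f n.+1 = binomial_transform f n - binomial_transform (f \o succn) n.
Proof.
rewrite /binomial_transform big_ord_recl /=.
under eq_bigr do rewrite binS mulrnDr mulrDl.
rewrite big_split /= addrA -sumrN; congr (_ + _).
  by rewrite big_ord_recr [RHS]big_ord_recl /= !bin0 bin_small ?mulr0n ?mul0r ?addr0.
by apply: eq_bigr => k _; rewrite exprS mulN1r mulNrn mulNr.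
Qed.

Lemma binomial_transformK f n : binomial_transform (binomial_transform f) n = f n.
Proof.
elim: n f => [|n IHn] f; first by rewrite /binomial_transform !big_ord1 /= !mul1r.
rewrite binomial_transformS (@eq_binomial_transform (_ \o succn)
  (fun k => binomial_transform f k - binomial_transform (f \o succn) k)).
  by rewrite binomial_transformB !IHn opprB addrC subrK.
by move=> k _ /=; rewrite binomial_transformS.
Qed.
End BinomialTransform.

Definition polyBernoulli_neg (R : pzRingType) (k n : nat) : R :=
  \sum_(m < n.+1) m.+1%:R ^+ k * binomial_transform (fun j => (- j%:R) ^+ n) m.

Lemma rmorph_polyBernoulli_neg (R S : pzRingType) (f : {rmorphism R -> S}) k n :
  f (polyBernoulli_neg R k n) = polyBernoulli_neg S k n.
Proof.
rewrite rmorph_sum; apply: eq_bigr => m _.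
rewrite rmorphM rmorphXn rmorph_nat rmorph_sum; congr (_ * _); apply: eq_bigr => j _.
by rewrite rmorphM rmorphMn rmorph_sign rmorphXn rmorphN rmorph_nat.
Qed.

Lemma coef_expneg_truncX n j i : (i <= n)%N ->
  (expneg_trunc n ^+ j)`_i = (- j%:R) ^+ i / i`!%:R.
Proof.
elim: j i => [|j IHj] i le_in.
  by rewrite expr0 coef1 oppr0 expr0n; case: i {le_in} => [|i]; rewrite ?divr1 ?mul0r.
rewrite exprS coefM -natr1 opprD exprDn mulr_suml; apply: eq_bigr => -[k lt_ki] _ /=.
have le_ki : (k <= i)%N by [].
rewrite coef_poly (leq_ltn_trans (leq_trans le_ki le_in)) // IHj; last first.
  exact: leq_trans (leq_subr _ _) le_in.
rewrite -mulr_natr -(bin_fact le_ki) !natrM.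
by field; rewrite !pnatr_eq0 -!lt0n !fact_gt0 bin_gt0.
Qed.

Lemma polyBernoulliN k n : polyBernoulli (- k%:Z) n = polyBernoulli_neg rat k n.
Proof.
rewrite /polyBernoulli coef_sum mulr_sumr; apply: eq_bigr => m _.
rewrite opprK coefZ addrC exprD1n coef_sum mulrCA mulr_sumr; congr (_ * _).
apply: eq_bigr => j _.
rewrite coefMn (exprNn (expneg_trunc n)) -(rmorph_sign polyC) coefCM coef_expneg_truncX //.
by rewrite -mulrnAl mulrCA [_ * (_ / _)]mulrC divfK // pnatr_eq0 -lt0n fact_gt0.
Qed.

Lemma sum_mul_partial_sums (R : comPzRingType) (a b : nat -> R) n :
  \sum_(m < n) a m * (\sum_(i < m.+1) b i) + \sum_(m < n) b m * (\sum_(i < m.+1) a i)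
  = (\sum_(m < n) a m) * (\sum_(m < n) b m) + \sum_(m < n) a m * b m.
Proof.
elim: n => [|n IHn]; first by rewrite !big_ord0 mul0r addr0.
rewrite !big_ord_recr /= addrACA IHn.
set A := \sum_(i < n) a i; set B := \sum_(i < n) b i.
ring.
Qed.

Lemma sum_bin_power_sums (R : pzRingType) n e :
  \sum_(t < e.+1) (\sum_(i < n) (i%:R : R) ^+ t) *+ 'C(e.+1, t) = n%:R ^+ e.+1.
Proof.
under eq_bigr do rewrite -sumrMnl.
rewrite exchange_big /=.
have telescoped i : \sum_(t < e.+1) (i%:R : R) ^+ t *+ 'C(e.+1, t) = i.+1%:R ^+ e.+1 - i%:R ^+ e.+1.
  by rewrite -natr1 exprD1n (big_ord_recr e.+1) /= binn addrK.
under eq_bigr do rewrite telescoped.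
rewrite -(big_mkord xpredT (fun i => i.+1%:R ^+ e.+1 - i%:R ^+ e.+1)).
by rewrite telescope_sumr // expr0n subr0.
Qed.

Section CharacteristicP.
Variables (F : fieldType) (p : nat).
Hypothesis pcharFp : p \in [pchar F].
Implicit Types f : nat -> F.

Let p_gt0 : (0 < p)%N := prime_gt0 (pcharf_prime pcharFp).
Let predpS : p.-1.+1 = p := prednK p_gt0.

Lemma natf_neq0_lt_pchar i : (0 < i < p)%N -> i%:R != 0 :> F.
Proof. by case/andP=> i_gt0 lt_ip; rewrite -(dvdn_pcharf pcharFp) gtnNdvd. Qed.

Lemma natf_exprV_pchar e k : (0 < e < p.-1)%N -> k%:R ^- e = k%:R ^+ (p.-1 - e) :> F.
Proof.
case/andP=> e_gt0 lt_ep; have [->|k_neq0] := eqVneq (k%:R : F) 0.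
  by rewrite !expr0n !eqn0Ngt e_gt0 subn_gt0 lt_ep invr0.
have fermat : k%:R ^+ p.-1 = 1 :> F.
  apply: (mulIf k_neq0); rewrite -exprSr predpS mul1r.
  exact: (pFrobenius_aut_nat pcharFp).
apply: (mulIf (expf_neq0 e k_neq0)).
by rewrite mulVf ?expf_neq0 // -exprD subnK ?fermat // ltnW.
Qed.

Lemma power_sum_pchar e : (0 < e < p.-1)%N -> \sum_(i < p) (i%:R : F) ^+ e = 0.
Proof.
elim/ltn_ind: e => -[//|e] IHe /andP[_ lt_ep].
have := sum_bin_power_sums F p e.+1.
rewrite (pcharf0 pcharFp) expr0n big_ord_recr big_ord_recl /=.
rewrite [X in _ + X + _]big1 => [|t _]; last first.
  by rewrite IHe ?mul0rn // /bump /=; have := ltn_ord t; lia.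
rewrite [X in X *+ _ + _ + _](eq_bigr (fun=> 1)) // sumr_const card_ord.
rewrite (pcharf0 pcharFp) !mul0rn !add0r binSn -mulr_natr => /eqP.
by rewrite mulf_eq0 (negbTE (natf_neq0_lt_pchar _)) ?orbF => [/eqP|] //; rewrite -[p]predpS ltnS.
Qed.

(* The k = 0 term is 0^-e = 0 for e > 0, so [harmonic e n] is H^(e)_(n-1). *)
Definition harmonic (e n : nat) : F := \sum_(k < n) k%:R ^- e.

Lemma harmonic_pchar e : (0 < e < p.-1)%N -> harmonic e p = 0.
Proof.
move=> e_bounds; rewrite /harmonic.
under eq_bigr do rewrite natf_exprV_pchar //.
by apply: power_sum_pchar; lia.
Qed.

Lemma signr_bin_predn_pchar k : (k < p)%N -> (-1) ^+ k *+ 'C(p.-1, k) = 1 :> F.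
Proof.
elim: k => [|k IHk] lt_kp; first by rewrite expr0 bin0.
have binS_pchar : 'C(p.-1, k.+1)%:R = - 'C(p.-1, k)%:R :> F.
  apply/eqP; rewrite -subr_eq0 opprK -natrD -binS predpS.
  by rewrite -(dvdn_pcharf pcharFp) prime_dvd_bin ?(pcharf_prime pcharFp).
by rewrite exprS -mulr_natr binS_pchar mulN1r mulrNN mulr_natr IHk // ltnW.
Qed.

Lemma binomial_transform_pchar f : binomial_transform f p.-1 = \sum_(k < p) f k.
Proof.
rewrite /binomial_transform predpS; apply: eq_bigr => k _.
by rewrite signr_bin_predn_pchar ?mul1r.
Qed.

Lemma binomial_transform_divS f n : f 0%N = 0 -> (n.+1 < p)%N ->
  binomial_transform (fun k => k%:R^-1 * f k) n.+1 =
  binomial_transform (fun k => k%:R^-1 * f k) n + n.+1%:R^-1 * binomial_transform f n.+1.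
Proof.
move=> f0 lt_n1p; rewrite binomial_transformS; congr (_ + _).
rewrite [in RHS]/binomial_transform big_ord_recl f0 mulr0 add0r mulr_sumr -sumrN.
apply: eq_bigr => -[k /= lt_kn1] _; rewrite /bump add1n.
have k1_neq0 : k.+1%:R != 0 :> F by apply: natf_neq0_lt_pchar; lia.
have n1_neq0 : n.+1%:R != 0 :> F by apply: natf_neq0_lt_pchar; lia.
have bin_absorb : 'C(n.+1, k.+1)%:R = n.+1%:R * 'C(n, k)%:R / k.+1%:R :> F.
  by rewrite -natrM (mul_bin_diag n.+1 k) natrM mulrAC mulfV ?mul1r.
rewrite -[_ *+ 'C(n, k)]mulr_natr -[_ *+ 'C(n.+1, k.+1)]mulr_natr bin_absorb exprS.
by field; rewrite !nat1r k1_neq0.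
Qed.

Lemma binomial_transform_div f n : f 0%N = 0 -> (n < p)%N ->
  binomial_transform (fun k => k%:R^-1 * f k) n = \sum_(m < n.+1) m%:R^-1 * binomial_transform f m.
Proof.
move=> f0; elim: n => [|n IHn] lt_n1p.
  by rewrite /binomial_transform !big_ord1 invr0 !mul0r mulr0.
by rewrite binomial_transform_divS // IHn 1?ltnW // [RHS]big_ord_recr.
Qed.

Lemma binomial_transform_invXS e n : (0 < e)%N -> (n.+1 < p)%N ->
  binomial_transform (fun k => (k%:R : F) ^- e.+1) n.+1 =
    binomial_transform (fun k => k%:R ^- e.+1) n
  + n.+1%:R^-1 * binomial_transform (fun k => k%:R ^- e) n.+1.
Proof.
move=> e_gt0 lt_n1p.
have invXS k : k%:R ^- e.+1 = k%:R^-1 * k%:R ^- e :> F by rewrite exprS invfM.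
rewrite !(eq_binomial_transform (fun k _ => invXS k)).
by rewrite binomial_transform_divS // expr0n eqn0Ngt e_gt0 invr0.
Qed.

Lemma binomial_transform_inv n : (n < p)%N ->
  binomial_transform (fun k => (k%:R : F) ^- 1) n = - harmonic 1 n.+1.
Proof.
move=> lt_np.
rewrite (@eq_binomial_transform _ _ (fun k => k%:R^-1 * (k != 0%N)%:R)); last first.
  by case=> [|k] _ /=; rewrite ?invr0 ?mulr0 ?mulr1.
rewrite binomial_transform_div // /harmonic -sumrN; apply: eq_bigr => -[[|m] _] _ /=.
  by rewrite invr0 mul0r oppr0.
suff -> : binomial_transform (fun k => (k != 0%N)%:R) m.+1 = -1 :> F by rewrite mulrN1 expr1.
have : \sum_(k < m.+2) (-1) ^+ k *+ 'C(m.+1, k) = 0 :> F by rewrite -exprD1n addNr expr0n.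
rewrite big_ord_recl expr0 bin0 => /(canRL (addKr 1)); rewrite addr0 => <-.
rewrite /binomial_transform [LHS]big_ord_recl mulr0 add0r.
by apply: eq_bigr => k _; rewrite mulr1.
Qed.

Lemma sum_invX2_binomial_transform f : f 0%N = 0 ->
  \sum_(N < p) N%:R ^- 2 * binomial_transform f N =
  \sum_(m < p) m%:R^-1 * \sum_(l < m.+1) l%:R^-1 * f l.
Proof.
move=> f0.
(* At p - 1 the transform is a plain sum, so both weights N^-1 can be pulled through
   it; the transform is then undone by involutivity. *)
transitivity (binomial_transform (fun N => N%:R^-1 * (N%:R^-1 * binomial_transform f N)) p.-1).
  rewrite binomial_transform_pchar; apply: eq_bigr => N _.
  by rewrite -exprVn expr2 mulrA.
rewrite binomial_transform_div ?invr0 ?mul0r ?ltn_predL // predpS.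
apply: eq_bigr => m _; rewrite binomial_transform_div //; last first.
  by rewrite /binomial_transform big_ord1 f0 mulr0.
by under eq_bigr do rewrite binomial_transformK.
Qed.

Lemma polyBernoulli_neg_pchar : (5 <= p)%N ->
  polyBernoulli_neg F (p - 3) (p - 3) =
  \sum_(m < (p - 3).+1) m.+1%:R ^- 2 * binomial_transform (fun k => k%:R ^- 2) m.
Proof.
move=> p_ge5.
have p_odd : odd p by case/even_prime: (pcharf_prime pcharFp) p_ge5 => [->|].
have natrX k : k%:R ^+ (p - 3) = k%:R ^- 2 :> F.
  by rewrite natf_exprV_pchar; [congr (_ ^+ _) | ]; lia.
apply: eq_bigr => m _; rewrite natrX; congr (_ * _); apply: eq_binomial_transform => k _.
by rewrite exprNn -signr_odd oddB ?p_odd ?(leq_trans _ p_ge5) //= mul1r natrX.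
Qed.

Lemma sum_succ_invX2_binomial_transform : (5 <= p)%N ->
  \sum_(m < (p - 3).+1) m.+1%:R ^- 2 * binomial_transform (fun k => (k%:R : F) ^- 2) m =
  \sum_(N < p) (N%:R ^- 2 * binomial_transform (fun k => k%:R ^- 2) N
               - N%:R ^- 3 * binomial_transform (fun k => k%:R ^- 1) N).
Proof.
move=> p_ge5.
pose G N : F := N%:R ^- 2 * binomial_transform (fun k => k%:R ^- 2) N
              - N%:R ^- 3 * binomial_transform (fun k => k%:R ^- 1) N.
transitivity (\sum_(N < p) G N); last by [].
have G0 : G 0%N = 0 by rewrite /G !expr0n /= invr0 !mul0r subrr.
have G_last : G p.-1 = 0.
  rewrite /G !binomial_transform_pchar -!/(harmonic _ p) !harmonic_pchar ?mulr0 ?subrr //; lia.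
rewrite -[in RHS](_ : (p - 3).+3 = p)%N; last by lia.
rewrite [RHS]big_ord_recr [X in _ = X + _]big_ord_recl /= G0 add0r.
rewrite (_ : (p - 3).+2 = p.-1); last by lia.
rewrite G_last addr0; apply: eq_bigr => m _.
have lt_m1p : (m.+1 < p)%N by have := ltn_ord m; lia.
by rewrite /G binomial_transform_invXS // mulrDr mulrA -invfM -exprSr addrK.
Qed.

Lemma polyBernoulli_neg_pchar_eq0 : (7 <= p)%N -> polyBernoulli_neg F (p - 3) (p - 3) = 0.
Proof.
move=> p_ge7; have p_ge5 : (5 <= p)%N by lia.
have sum_inv2 : \sum_(N < p) N%:R ^- 2 * binomial_transform (fun k => k%:R ^- 2) N =
                \sum_(m < p) m%:R ^- 1 * harmonic 3 m.+1.
  rewrite sum_invX2_binomial_transform ?expr0n ?invr0 //; apply: eq_bigr => m _.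
  by congr (_ * _); apply: eq_bigr => l _; rewrite -invfM -exprS.
have sum_inv3 : \sum_(N < p) N%:R ^- 3 * binomial_transform (fun k => k%:R ^- 1) N =
                - \sum_(m < p) m%:R ^- 3 * harmonic 1 m.+1.
  by rewrite -sumrN; apply: eq_bigr => N _; rewrite binomial_transform_inv // mulrN.
rewrite polyBernoulli_neg_pchar // sum_succ_invX2_binomial_transform // sumrB sum_inv2 sum_inv3.
rewrite opprK /harmonic (sum_mul_partial_sums (fun m => (m%:R : F) ^- 1) (fun m => m%:R ^- 3)).
under [X in _ + X]eq_bigr do rewrite -invfM -exprS.
by rewrite -!/(harmonic _ p) !harmonic_pchar ?mul0r ?add0r //; lia.
Qed.

End CharacteristicP.

Theorem theorem3p5 (p : nat) (hp : prime p) (h7 : (7 <= p)%N) :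
  exists z : int, polyBernoulli (- (p%:Z) + 3) (p - 3)%N = ((p%:Z * z)%:~R : rat).
Proof.
set z := polyBernoulli_neg int (p - 3) (p - 3).
have p_dvd_z : (p%:Z %| z)%Z.
  rewrite (dvdz_pcharf (pchar_Fp hp)) -[z%:~R]/(intmul 1 z) rmorph_polyBernoulli_neg.
  by rewrite polyBernoulli_neg_pchar_eq0 ?pchar_Fp.
have -> : - (p%:Z) + 3 = - (p - 3)%N%:Z by rewrite -subzn ?(leq_trans _ h7) // opprB addrC.
exists (z %/ p)%Z.
by rewrite mulrC divzK // polyBernoulliN -[RHS]/(intmul 1 z) rmorph_polyBernoulli_neg.
Qed.
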